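(* Assume $CA_2$. Then ccc is not productive: there are partial orders $\mathbb P$ and $\mathbb Q$, each satisfying the countable chain condition, such that $\mathbb P\times\mathbb Q$ does not satisfy the countable chain condition.
   Context: A type is a sequence $\tau=\{(m_k,n_{k+1},r_{k+1})\}_{k\in\omega}$ of natural numbers with $m_0=1$; $n_k\ge2$ for $k\ge1$; every $r\in\omega$ equals $r_k$ for infinitely many $k$; $m_k>r_{k+1}$; and $m_{k+1}=r_{k+1}+(m_k-r_{k+1})n_{k+1}$ for all $k$. For a set of ordinals $X$ and $\mathcal F\subseteq[X]^{<\omega}$, $\mathcal F_k$ is the set of elements of rank $k$ in $(\mathcal F,\subsetneq)$; $A\sqsubseteq B$ means $A\subseteq B$ and every element of $B$ below an element of $A$ is in $A$; $A<B$ means every element of $A$ is below every element of $B$. $\mathcal F$ is a construction scheme over $X$ of type $\tau$ if (1) every finite subset of $X$ lies in a member of $\mathcal F$; (2) $|F|=m_k$ for $F\in\mathcal F_k$; (3) $E\cap F\sqsubseteq E,F$ for $E,F\in\mathcal F_k$; (4) each $F\in\mathcal F_{k+1}$ is the union of uniquely determined $F_0,\dots,F_{n_{k+1}-1}\in\mathcal F_k$ forming a $\Delta$-system with root $R(F)$, $|R(F)|=r_{k+1}$, $R(F)<F_0\setminus R(F)<\dots<F_{n_{k+1}-1}\setminus R(F)$. For a construction scheme $\mathcal F$ over $\omega_1$, $l\ge1$, $F\in\mathcal F_l$ and finite $\mathcal C\subseteq[\omega_1]^{<\omega}$: $F$ captures $\mathcal C$ if $|\mathcal C|\le n_l$ and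 $\mathcal C$ can be enumerated as $\{c_i\}_{i<|\mathcal C|}$ with $c_i\subseteq F_i$, $c_i\setminus R(F)\neq\emptyset$ and $\phi_i[c_0]=c_i$ where $\phi_i:F_0\to F_i$ is the increasing bijection. $\mathcal F$ is $n$-capturing if for every uncountable $S\subseteq[\omega_1]^{<\omega}$ and every $k\in\omega$ there are $\mathcal C\in[S]^n$, $l>k$ and $F\in\mathcal F_l$ capturing $\mathcal C$. $CA_n$ is the statement: for every type $\tau$ with $n\le n_k$ for all $k\ge1$ there is an $n$-capturing construction scheme over $\omega_1$ of type $\tau$. *)

From HB Require Import structures.
From mathcomp Require Import all_boot all_order.
From mathcomp Require Import boolp classical_sets cardinality.

Set Implicit Arguments.
Unset Strict Implicit.
Unset Printing Implicit Defensive.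

Local Open Scope classical_set_scope.
Local Open Scope card_scope.

(* omega_1, given up to isomorphism: a well-founded strict total order  *)
Definition is_omega1 (W : Type) (lt : W -> W -> Prop) : Prop :=
  [/\ (forall x, ~ lt x x),
      (forall x y z, lt x y -> lt y z -> lt x z),
      (forall x y, [\/ lt x y, x = y | lt y x]),
      well_founded lt
    & (~ countable [set: W] /\ forall x, countable [set y | lt y x])].

(* Types tau = {(m_k, n_{k+1}, r_{k+1})}_k ; n 0 and r 0 are unused.   *)
Definition is_type (m n r : nat -> nat) : Prop :=
  [/\ m 0 = 1,
      (forall k, 1 <= k -> 2 <= n k),
      (forall x N, exists k, N < k /\ r k = x),
      (forall k, r k.+1 < m k)
    & (forall k, m k.+1 = r k.+1 + (m k - r k.+1) * n k.+1)].

Section Schemes.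
Variables (W : Type) (lt : W -> W -> Prop).

Definition set_lt (A B : set W) : Prop :=
  forall a b, A a -> B b -> lt a b.

Definition init_seg (A B : set W) : Prop :=
  A `<=` B /\ (forall x y, B x -> A y -> lt x y -> A x).

Fixpoint has_height (Fam : set (set W)) (k : nat) (F : set W) : Prop :=
  match k with
  | 0 => Fam F
  | k'.+1 => Fam F /\ exists E, [/\ Fam E, E `<` F & has_height Fam k' E]
  end.

(* rank of F in the (well-founded, since all members are finite)
   poset (Fam, proper inclusion): length of the longest descending chain *)
Definition rank_is (Fam : set (set W)) (k : nat) (F : set W) : Prop :=
  has_height Fam k F /\ ~ has_height Fam k.+1 F.

Definition level (Fam : set (set W)) (k : nat) : set (set W) :=
  [set F | rank_is Fam k F].

Definition decomp (Fam : set (set W)) (n r : nat -> nat) (l : nat)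
    (F : set W) (Fs : nat -> set W) (R : set W) : Prop :=
  [/\ (forall i, i < n l -> level Fam l.-1 (Fs i)),
      F = \bigcup_(i < n l) Fs i,
      (forall i j, i < j -> j < n l -> Fs i `&` Fs j = R),
      R #= `I_(r l)
    & (set_lt R (Fs 0 `\` R) /\
       forall i, i.+1 < n l -> set_lt (Fs i `\` R) (Fs i.+1 `\` R ))].

Definition construction_scheme (Fam : set (set W)) (m n r : nat -> nat)
    : Prop :=
  [/\ (forall F, Fam F -> finite_set F),
      (forall A, finite_set A -> exists2 F, Fam F & A `<=` F),
      (forall k F, level Fam k F -> F #= `I_(m k)),
      (forall k E F, level Fam k E -> level Fam k F ->
                   init_seg (E `&` F) E /\ init_seg (E `&` F) F)
    & (forall k F, level Fam k.+1 F ->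
                   (exists Fs R, decomp Fam n r k.+1 F Fs R) /\
                   (forall Fs R Gs R', decomp Fam n r k.+1 F Fs R ->
                      decomp Fam n r k.+1 F Gs R' ->
                      forall i, i < n k.+1 -> Fs i = Gs i))].

Definition incr_bij (phi : W -> W) (A B : set W) : Prop :=
  [/\ (forall x, A x -> B (phi x)),
      (forall y, B y -> exists2 x, A x & phi x = y)
    & (forall x y, A x -> A y -> lt x y -> lt (phi x) (phi y))].

Definition captures (Fam : set (set W)) (n r : nat -> nat) (l : nat)
    (F : set W) (C : set (set W)) : Prop :=
  exists p, p <= n l /\
  exists c : nat -> set W,
    [/\ (forall i j, i < p -> j < p -> c i = c j -> i = j),
        C = c @` `I_p
      & exists Fs R, decomp Fam n r l F Fs R /\
          forall i, i < p ->
            [/\ c i `<=` Fs i,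
                c i `\` R !=set0
              & exists2 phi, incr_bij phi (Fs 0) (Fs i) & phi @` c 0 = c i]].

Definition n_capturing (Fam : set (set W)) (n r : nat -> nat) (q : nat)
    : Prop :=
  forall S : set (set W), (forall s, S s -> finite_set s) -> ~ countable S ->
  forall k, exists C : set (set W),
    [/\ C `<=` S, C #= `I_q &
        exists l, k < l /\ exists2 F, level Fam l F & captures Fam n r l F C].

End Schemes.

Definition CA (W : Type) (lt : W -> W -> Prop) (q : nat) : Prop :=
  forall m n r : nat -> nat, is_type m n r ->
    (forall k, 1 <= k -> q <= n k) ->
    exists Fam : set (set W),
      construction_scheme lt Fam m n r /\ n_capturing lt Fam n r q.

Definition partial_order (P : Type) (le : P -> P -> Prop) : Prop :=
  [/\ (forall p, le p p),
      (forall p q, le p q -> le q p -> p = q)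
    & (forall p q s, le p q -> le q s -> le p s)].

Definition compatible (P : Type) (le : P -> P -> Prop) (p q : P) : Prop :=
  exists s, le s p /\ le s q.

Definition antichain (P : Type) (le : P -> P -> Prop) (A : set P) : Prop :=
  forall p q, A p -> A q -> p <> q -> ~ compatible le p q.

Definition ccc (P : Type) (le : P -> P -> Prop) : Prop :=
  forall A : set P, antichain le A -> countable A.

Definition prod_le (P Q : Type) (leP : P -> P -> Prop) (leQ : Q -> Q -> Prop)
    (x y : P * Q) : Prop :=
  leP x.1 y.1 /\ leQ x.2 y.2.

From HB Require Import structures.
From mathcomp Require Import all_boot all_order finmap.
From mathcomp Require Import boolp classical_sets cardinality.
From mathcomp Require Import zify.

(* A pair a < c of countable ordinals is split by the decomposition of some F
   in Fam_(k+1), with a in F_0 and c in F_1 outside the root; the level k is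
   unique and so is the increasing bijection phi : F_0 -> F_1 at that level.
   Colour the pair by whether phi a lies below or above c, and let P_b be the
   finite b-homogeneous sets ordered by reverse inclusion. Since no pair gets
   both colours, the pairs ({a}, {a}) form an uncountable antichain in
   P_true x P_false. For the ccc of P_b, refine an uncountable family to a
   Delta-system, attach to each member x a member x' whose new part lies above
   x, and capture two of the unions x0 u x0', x1 u x1'. The capturing map sends
   x0 onto x1 and x0' onto x1'; for a in x0 and a new element c = phi a' of x1'
   we have a < a', hence phi a < c, so x0 u x1' is true-homogeneous, and
   symmetrically x0' u x1 is false-homogeneous. *)

Set Implicit Arguments.
Unset Strict Implicit.
Unset Printing Implicit Defensive.

Local Open Scope classical_set_scope.
Local Open Scope card_scope.

Section Countable.
Variable T : Type.
Implicit Types A B : set T.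

Lemma countable_setU A B : countable A -> countable B -> countable (A `|` B).
Proof.
move=> cA cB.
have -> : A `|` B = \bigcup_(b in [set: bool]) (if b then A else B).
  apply/seteqP; split=> [x [] ?|x [] [] _ ?];
  by [exists true | exists false | left | right].
by apply: bigcup_countable => [|[]]; first exact: countableP.
Qed.

Lemma uncountable_setD A B : ~ countable A -> countable B -> ~ countable (A `\` B).
Proof.
move=> nA cB cAB; apply: nA; apply: sub_countable (countable_setU cAB cB).
by apply: subset_card_le => x Ax; have [Bx|nBx] := pselect (B x); [right|left].
Qed.

Lemma uncountable_neq0 A : ~ countable A -> A !=set0.
Proof. by move=> nA; apply/set0P/negP => /eqP A0; apply: nA; rewrite A0 countable0. Qed.

Lemma countable_image (U : Type) (f : T -> U) A : countable A -> countable (f @` A).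
Proof. by move=> cA; apply: sub_countable cA; apply: card_image_le. Qed.

Lemma uncountable_image (U : Type) (f : T -> U) A :
  (forall x y, A x -> A y -> f x = f y -> x = y) ->
  ~ countable A -> ~ countable (f @` A).
Proof.
move=> injf nA cfA; apply: nA.
have fAA : f @` A #= A.
  by apply: inj_card_eq => x y /set_mem Ax /set_mem Ay; apply: injf.
by rewrite -(eq_countable fAA).
Qed.

Lemma uncountable_fiber A (f : T -> nat) :
  ~ countable A -> exists N, ~ countable [set x | A x /\ f x = N].
Proof.
move=> nA; apply: contrapT => /forallNP cf; apply: nA.
apply: sub_countable (@bigcup_countable _ _ [set: nat]
  (fun N => [set x | A x /\ f x = N]) (countableP _) (fun N _ => contrapT (cf N))).
by apply: subset_card_le => x Ax; exists (f x).
Qed.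

Lemma uncountable_image_supset (f : set T -> set T) (A : set (set T)) :
  (forall x, A x -> x `<=` f x /\ finite_set (f x)) ->
  ~ countable A -> ~ countable (f @` A).
Proof.
move=> hf nA cV; apply: nA.
pose sub_fin (u : set T) := [set z | z `<=` u /\ finite_set z].
have : countable (\bigcup_(u in f @` A) sub_fin u).
  apply: bigcup_countable cV _ => _ [x /hf[_ fin] <-].
  exact/countable_finite_subset/finite_set_countable.
apply: sub_countable; apply: subset_card_le => x Ax; have [xf fin] := hf x Ax.
by exists (f x); [exists x | split=> //; apply: sub_finite_set fin].
Qed.

End Countable.

(* [fset_set A] is empty when [A] is infinite, so [fcard] is only meaningful on
   finite sets. *)
Definition fcard {T : choiceType} (A : set T) := #|` fset_set A|%fset.

Section FiniteCard.
Variable T : choiceType.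
Implicit Types A B : set T.

Lemma fcard_eq0 A : finite_set A -> fcard A = 0 -> A = set0.
Proof. by move=> fA /cardfs0_eq; apply: fset_set_set0. Qed.

Lemma fcard_neq0 A N : fcard A = N.+1 -> A !=set0.
Proof.
by move=> cA; apply/set0P/negP => /eqP A0; move: cA; rewrite A0 /fcard fset_set0.
Qed.

Lemma fcardD1 A a : finite_set A -> A a -> fcard (A `\ a) = (fcard A).-1.
Proof.
move=> fA Aa; rewrite /fcard fset_setD1 // [in RHS](cardfsD1 a).
by rewrite in_fset_set // (mem_set Aa).
Qed.

Lemma fcard_image (U : choiceType) (f : T -> U) A : finite_set A ->
  (forall x y, A x -> A y -> f x = f y -> x = y) -> fcard (f @` A) = fcard A.
Proof.
move=> fA injf; rewrite /fcard fset_set_image // card_in_imfset //.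
by move=> x y; rewrite !in_fset_set // !inE; apply: injf.
Qed.

Lemma subset_fcard_eq A B : finite_set B -> A `<=` B -> fcard B <= fcard A -> A = B.
Proof.
move=> fB AB BA; have fA := sub_finite_set AB fB.
have sAB : (fset_set A `<=` fset_set B)%fset by rewrite -fset_set_sub.
apply: fset_set_inj => //; apply/eqP.
by rewrite -(fsubset_leqif_cards sAB).2 eqn_leq (fsubset_leq_card sAB) BA.
Qed.

End FiniteCard.

Section DeltaSystem.
Variable T : choiceType.

Definition delta (S : set (set T)) (D : set T) :=
  forall x y, S x -> S y -> x <> y -> x `&` y = D.

Lemma delta_setD1 (S S' : set (set T)) D a :
  (forall x, S x -> x a /\ S' (x `\ a)) -> delta S' D -> delta S (D `|` [set a]).
Proof.
move=> hS dS' x y Sx Sy xy.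
have [xa S'x] := hS x Sx; have [ya S'y] := hS y Sy.
have xy' : x `\ a <> y `\ a.
  by move=> e; apply: xy; rewrite -(setD1K xa) -(setD1K ya) e.
rewrite -(dS' _ _ S'x S'y xy'); apply/seteqP; split=> z.
  by move=> [xz yz]; have [->|za] := pselect (z = a); [right | left].
by case=> [[[xz _] [yz _]]|->].
Qed.

Lemma disjoint_subfamily (S : set (set T)) :
  (forall x, S x -> finite_set x /\ x !=set0) ->
  (forall a, countable [set x | S x /\ x a]) -> ~ countable S ->
  exists2 S', S' `<=` S & ~ countable S' /\ delta S' set0.
Proof.
move=> hS cS nS.
pose P M := M `<=` S /\ delta M set0.
have [M [[MS dM] Mmax]] : exists M, P M /\ forall M', M `<` M' -> ~ P M'.
  apply: Zorn_bigcup => C CP Ctot; split=> [x [X /CP[XS _] /XS //]|].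
  move=> x y [X CX Xx] [Y CY Yy] xy.
  have [XY|YX] := Ctot X Y CX CY.
    by have [_ d] := CP Y CY; apply: d => //; apply: XY.
  by have [_ d] := CP X CX; apply: d => //; apply: YX.
exists M => //; split=> // cM.
have cB : countable (\bigcup_(a in \bigcup_(x in M) x) [set x | S x /\ x a]).
  apply: bigcup_countable => [|a _]; last exact: cS.
  apply: bigcup_countable cM _ => x /MS /hS[fx _].
  exact: finite_set_countable.
have [x [Sx nBx]] := uncountable_neq0 (uncountable_setD nS cB).
have disj m : M m -> x `&` m = set0.
  move=> Mm; apply/seteqP; split=> // z [xz mz]; apply: nBx.
  by exists z; [exists m|].
apply: (Mmax (M `|` [set x])).
  split=> [m Mm|]; first by left.
  move=> /(_ x (or_intror erefl)) Mx; have [_ [z xz]] := hS x Sx.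
  by apply: nBx; exists z; [exists x|].
split=> [m [/MS|->] //|].
move=> y z [My|->] [Mz|->] yz; [exact: dM|rewrite setIC; exact: disj|exact: disj|by []].
Qed.

Lemma delta_system_fcard N (S : set (set T)) :
  (forall x, S x -> finite_set x /\ fcard x = N) -> ~ countable S ->
  exists S' D, [/\ S' `<=` S, ~ countable S' & delta S' D].
Proof.
elim: N S => [|N IH] S hS nS.
  exfalso; apply: nS; apply: sub_countable (countable1 set0); apply: subset_card_le.
  by move=> x /hS[fx /(fcard_eq0 fx)].
have [[a na]|/forallNP cS] := pselect (exists a, ~ countable [set x | S x /\ x a]).
  set Sa := [set x | S x /\ x a] in na.
  have injD1 x y : Sa x -> Sa y -> x `\ a = y `\ a -> x = y.
    by move=> [_ xa] [_ ya] e; rewrite -(setD1K xa) -(setD1K ya) e.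
  have hSa x : ((fun x => x `\ a) @` Sa) x -> finite_set x /\ fcard x = N.
    move=> [y [Sy ya] <-]; have [fy cy] := hS y Sy.
    by split; [exact: finite_setD | rewrite fcardD1 // cy].
  have [S3 [D [S3Sa nS3 dS3]]] := IH _ hSa (uncountable_image injD1 na).
  exists [set x | Sa x /\ S3 (x `\ a)], (D `|` [set a]); split.
  - by move=> x [[]].
  - move=> cS'; apply: nS3.
    apply: sub_countable (countable_image (fun x => x `\ a) cS').
    apply: subset_card_le => z S3z; have [x Sax ex] := S3Sa z S3z.
    by exists x => //; split; rewrite ?ex.
  - by apply: delta_setD1 dS3 => x [[_ xa] S3x].
have hS0 x : S x -> finite_set x /\ x !=set0.
  by move=> /hS[fx cx]; split=> //; apply: fcard_neq0 cx.
have [S' S'S [nS' dS']] := disjoint_subfamily hS0 (fun a => contrapT (cS a)) nS.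
by exists S', set0.
Qed.

Lemma delta_system (S : set (set T)) :
  (forall x, S x -> finite_set x) -> ~ countable S ->
  exists S' D N, [/\ S' `<=` S, ~ countable S', (forall x, S' x -> fcard x = N)
    & delta S' D].
Proof.
move=> fS nS; have [N nSN] := uncountable_fiber fcard nS.
have hSN x : [set x | S x /\ fcard x = N] x -> finite_set x /\ fcard x = N.
  by move=> [Sx cx]; split=> //; apply: fS.
have [S' [D [S'S nS' dS']]] := delta_system_fcard hSN nSN.
by exists S', D, N; split=> // x /S'S[].
Qed.

Section Root.
Variables (S : set (set T)) (D : set T).
Hypotheses (nS : ~ countable S) (dS : delta S D).

Lemma delta_root_sub x : S x -> D `<=` x.
Proof.
move=> Sx; have [y [Sy yx]] := uncountable_neq0 (uncountable_setD nS (countable1 x)).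
by rewrite -(dS Sx Sy (nesym yx)) => z [].
Qed.

Lemma delta_root_proper N x : (forall y, S y -> finite_set y /\ fcard y = N) ->
  S x -> ~ x `<=` D.
Proof.
move=> hS Sx xD.
have [y [Sy yx]] := uncountable_neq0 (uncountable_setD nS (countable1 x)).
have xy : x `<=` y by move=> z /xD; rewrite -(dS Sx Sy (nesym yx)) => -[].
have [[fx cx] [fy cy]] := (hS x Sx, hS y Sy).
by apply: yx; symmetry; apply: subset_fcard_eq xy _; rewrite ?cx ?cy.
Qed.

End Root.

End DeltaSystem.

Section StrictWellOrder.
Variables (T : choiceType) (lt : T -> T -> Prop).
Hypotheses (lt_irr : forall x, ~ lt x x)
  (lt_trans : forall x y z, lt x y -> lt y z -> lt x z)
  (lt_total : forall x y, [\/ lt x y, x = y | lt y x])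
  (lt_wf : well_founded lt).

Lemma lt_asym x y : lt x y -> ~ lt y x.
Proof. by move=> xy yx; apply: (lt_irr (lt_trans xy yx)). Qed.

Definition incr_on (A : set T) (f : T -> T) :=
  forall x y, A x -> A y -> lt x y -> lt (f x) (f y).

Lemma incr_on_inj A f : incr_on A f -> forall x y, A x -> A y -> f x = f y -> x = y.
Proof.
move=> incr x y Ax Ay e; have [xy|//|yx] := lt_total x y.
  by have := incr _ _ Ax Ay xy; rewrite e => /lt_irr.
by have := incr _ _ Ay Ax yx; rewrite e => /lt_irr.
Qed.

Lemma incr_on_lt_inv A f : incr_on A f ->
  forall x y, A x -> A y -> lt (f x) (f y) -> lt x y.
Proof.
move=> incr x y Ax Ay fxy; have [//|e|yx] := lt_total x y.
  by rewrite e in fxy; case: (lt_irr fxy).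
by case: (lt_asym fxy (incr _ _ Ay Ax yx)).
Qed.

Lemma incr_bij_incr f A B : incr_bij lt f A B -> incr_on A f.
Proof. by case. Qed.

Lemma incr_bij_sub f A B A' : incr_bij lt f A B -> A' `<=` A ->
  incr_bij lt f A' (f @` A').
Proof.
case=> _ _ incr A'A; split=> [x A'x|_ [x A'x <-]|x y /A'A Ax /A'A Ay].
- by exists x.
- by exists x.
- exact: incr.
Qed.

Lemma incr_bij_init_seg f A B L : incr_bij lt f A B -> init_seg lt L A ->
  init_seg lt (f @` L) B.
Proof.
move=> [maps onto incr] [LA initL]; split=> [_ [x /LA Ax <-]|]; first exact: maps.
move=> z _ Bz [y Ly <-] zy; have [x Ax ex] := onto z Bz.
exists x => //; apply: (initL _ _ Ax Ly).
by apply: (incr_on_lt_inv incr Ax (LA _ Ly)); rewrite ex.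
Qed.

Lemma init_seg_transfer (X Y Y' : set T) :
  init_seg lt X Y -> X `<=` Y' -> init_seg lt (Y `&` Y') Y' -> init_seg lt X Y'.
Proof.
move=> [XY initX] XY' [_ initYY']; split=> // z x Y'z Xx zx.
have [Yz _] := initYY' z x Y'z (conj (XY x Xx) (XY' x Xx)) zx.
exact: initX Yz Xx zx.
Qed.

Lemma incr_init_unique (A B : set T) (f g : T -> T) :
  incr_on A f -> incr_on A g -> init_seg lt (f @` A) B -> init_seg lt (g @` A) B ->
  forall y, A y -> f y = g y.
Proof.
have below (f1 g1 : T -> T) y : incr_on A f1 -> incr_on A g1 ->
    init_seg lt (f1 @` A) B -> init_seg lt (g1 @` A) B ->
    (forall x, lt x y -> A x -> f1 x = g1 x) -> A y -> ~ lt (f1 y) (g1 y).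
  move=> incf incg [fAB _] [_ initg] IH Ay fg.
  have [x Ax ex] := initg _ _ (fAB _ (imageP _ Ay)) (imageP _ Ay) fg.
  have [xy|exy|yx] := lt_total x y.
  - by move: (incf _ _ Ax Ay xy); rewrite IH // ex => /lt_irr.
  - by move: fg; rewrite -ex exy => /lt_irr.
  - by apply: lt_asym fg; rewrite -ex; apply: incg.
move=> incf incg initf initg y; elim/(well_founded_ind lt_wf): y => y IH Ay.
have [fg|//|gf] := lt_total (f y) (g y); exfalso.
  by apply: (below f g y) => // x xy Ax; apply: IH.
by apply: (below g f y) => // x xy Ax; symmetry; apply: IH.
Qed.

Lemma incr_bij_init_image f A B A0 B0 : incr_bij lt f A B ->
  A0 `<=` A -> B0 `<=` B -> set_lt lt A0 (A `\` A0) -> set_lt lt B0 (B `\` B0) ->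
  finite_set A0 -> finite_set B0 -> fcard A0 = fcard B0 -> f @` A0 = B0.
Proof.
move=> fAB A0A B0B A0lt B0lt fA0 fB0 cA0B0; have [maps onto incr] := fAB.
have cf : fcard (f @` A0) = fcard B0.
  by rewrite fcard_image // => x y /A0A Ax /A0A Ay; apply: incr_on_inj incr x y Ax Ay.
(* [f @` A0] and [B0] are initial segments of [B] of the same size, and any two
   initial segments are comparable. *)
have [sub|/existsNP[_ /not_implyP[[a A0a <-] nB0]]] := pselect (f @` A0 `<=` B0).
  by apply: subset_fcard_eq sub _; rewrite ?cf.
symmetry; apply: subset_fcard_eq; [exact: finite_image | | by rewrite cf].
move=> z B0z; apply: contrapT => nz.
have [a' Aa' ea'] := onto z (B0B z B0z).
have nA0a' : ~ A0 a' by move=> A0a'; apply: nz; exists a'.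
have := incr _ _ (A0A _ A0a) Aa' (A0lt _ _ A0a (conj Aa' nA0a')); rewrite ea'.
by apply: lt_asym; apply: B0lt => //; split=> //; apply: maps; apply: A0A.
Qed.

Lemma incr_bij_partner_image f x x' y y' :
  incr_bij lt f (x `|` x') (y `|` y') ->
  x `&` x' = y `&` y' -> (forall z, (x `&` x') z -> f z = z) ->
  set_lt lt x (x' `\` x) -> set_lt lt y (y' `\` y) ->
  finite_set x -> finite_set y -> fcard x = fcard y ->
  f @` x = y /\ f @` x' = y'.
Proof.
move=> fxy eD fixD xlt ylt fx fy cxy; have [maps onto incr] := fxy.
have ex : f @` x = y.
  apply: (incr_bij_init_image fxy) => // [a b xa [[//|x'b] nxb]|a b ya [[//|y'b] nyb]].
    exact: xlt.
  exact: ylt.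
split=> //; apply/seteqP; split=> [_ [z x'z <-]|w y'w].
  have [xz|nxz] := pselect (x z).
    by rewrite fixD //; have [] : (y `&` y') z by rewrite -eD.
  case: (maps z (or_intror x'z)) => // yfz; case: nxz; move: yfz.
  rewrite -ex => -[z' xz' e].
  by rewrite -(incr_on_inj incr (or_introl xz') (or_intror x'z) e).
have [yw|nyw] := pselect (y w).
  have [xw x'w] : (x `&` x') w by rewrite eD.
  by exists w; [|apply: fixD].
have [z [xz|x'z] ez] := onto w (or_intror y'w); last by exists z.
by case: nyw; rewrite -ex -ez; exists z.
Qed.

Section Scheme.
Variables (Fam : set (set T)) (m n r : nat -> nat).
Hypotheses (Fam_cs : construction_scheme lt Fam m n r)
  (n_ge2 : forall k, 1 <= k -> 2 <= n k).

Lemma level_init_seg k E F : level Fam k E -> level Fam k F ->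
  init_seg lt (E `&` F) E.
Proof. by case: Fam_cs => _ _ _ h _ /h /[apply] -[]. Qed.

Lemma level_decomp k F : level Fam k.+1 F ->
  exists Fs R, decomp lt Fam n r k.+1 F Fs R.
Proof. by case: Fam_cs => _ _ _ _ h /h[]. Qed.

Section Decomposition.
Variables (k : nat) (F : set T) (Fs : nat -> set T) (R : set T).
Hypothesis dec : decomp lt Fam n r k.+1 F Fs R.

Lemma decomp_level i : i <= 1 -> level Fam k (Fs i).
Proof.
by case: dec => lev _ _ _ _ i1; apply: lev; apply: leq_trans (n_ge2 (ltn0Sn k)).
Qed.

Lemma decomp_sub i : i <= 1 -> Fs i `<=` F.
Proof.
case: dec => _ -> _ _ _ i1 z Fiz; exists i => //.
exact: leq_trans (n_ge2 (ltn0Sn k)).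
Qed.

Lemma decomp_root : Fs 0 `&` Fs 1 = R.
Proof. by case: dec => _ _ -> //; apply: n_ge2. Qed.

Lemma decomp_root_init0 : init_seg lt R (Fs 0).
Proof. by rewrite -decomp_root; apply: level_init_seg; apply: decomp_level. Qed.

Lemma decomp_root_init1 : init_seg lt R (Fs 1).
Proof. by rewrite -decomp_root setIC; apply: level_init_seg; apply: decomp_level. Qed.

Lemma decomp_lt a b : Fs 0 a -> (Fs 1 `\` R) b -> lt a b.
Proof.
move=> F0a [F1b nRb]; have [Ra|nRa] := pselect (R a).
  have [_ initR] := decomp_root_init1.
  have [//|eab|ba] := lt_total a b; first by case: nRb; rewrite -eab.
  by case: nRb; apply: initR F1b Ra ba.
by case: dec => _ _ _ _ [_ /(_ 0 (n_ge2 (ltn0Sn k)))]; apply.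
Qed.

End Decomposition.

Lemma level_init_seg_le t K E H : t <= K -> level Fam t E -> level Fam K H ->
  init_seg lt (E `&` H) E.
Proof.
elim: K H => [|K IH] H; first by rewrite leqn0 => /eqP ->; apply: level_init_seg.
rewrite leq_eqVlt ltnS => /orP[/eqP ->|tK]; first exact: level_init_seg.
move=> lE /level_decomp[Fs [R dec]]; split=> [z []//|x y Ex [Ey Hy] xy].
have [lev eH _ _ _] := dec; split=> //; move: Hy; rewrite eH => -[i iK Fiy].
have [_ initEFi] := IH (Fs i) tK lE (lev i iK).
by exists i => //; have [] := initEFi x y Ex (conj Ey Fiy) xy.
Qed.

Definition shift k F Fs R phi :=
  [/\ level Fam k.+1 F, decomp lt Fam n r k.+1 F Fs R
    & incr_bij lt phi (Fs 0) (Fs 1)].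

Definition pair_color (b : bool) (a c : T) := exists k F Fs R phi,
  [/\ shift k F Fs R phi, (Fs 0 `\` R) a, (Fs 1 `\` R) c
    & if b then lt (phi a) c else lt c (phi a)].

Definition homogeneous b (z : set T) :=
  forall a c, z a -> z c -> lt a c -> pair_color b a c.

Lemma pair_color_lt b a c : pair_color b a c -> lt a c.
Proof.
by case=> k [F [Fs [R [phi [[_ dec _] [F0a _] F1c _]]]]]; exact: (decomp_lt dec F0a F1c).
Qed.

Lemma homogeneous_setU b p q : homogeneous b p -> homogeneous b q ->
  (forall a c, p a -> ~ q a -> q c -> ~ p c -> pair_color b a c) ->
  homogeneous b (p `|` q).
Proof.
move=> hp hq cross a c [pa|qa] [pc|qc] ac; [exact: hp| | |exact: hq].
- have [qa|nqa] := pselect (q a); first exact: hq.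
  have [pc|npc] := pselect (p c); first exact: hp.
  exact: cross.
- have [pa|npa] := pselect (p a); first exact: hp.
  have [qc|nqc] := pselect (q c); first exact: hq.
  by case: (lt_asym ac (pair_color_lt (cross _ _ pc nqc qa npa))).
Qed.

Section Shift.
Variables (k : nat) (F : set T) (Fs : nat -> set T) (R : set T) (phi : T -> T).
Hypothesis sh : shift k F Fs R phi.

Lemma shift_root_fixed z : R z -> phi z = z.
Proof.
have [_ dec ib] := sh; have [R0 _] := decomp_root_init0 dec.
move=> Rz; symmetry; apply: (@incr_init_unique R (Fs 1) id phi) => //.
- by move=> x y /R0 F0x /R0 F0y; apply: (incr_bij_incr ib).
- by rewrite image_id; apply: decomp_root_init1 dec.
- exact: incr_bij_init_seg ib (decomp_root_init0 dec).
Qed.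

Lemma shift_root_inv z : Fs 0 z -> R (phi z) -> R z.
Proof.
move=> F0z Rz; have [_ dec ib] := sh; have [R0 _] := decomp_root_init0 dec.
have e : phi (phi z) = phi z := shift_root_fixed Rz.
by rewrite -(incr_on_inj (incr_bij_incr ib) (R0 _ Rz) F0z e).
Qed.

Lemma shift_setI_root x : x `<=` Fs 0 -> x `&` R = x `&` phi @` x.
Proof.
move=> xF; have [_ dec [maps _ _]] := sh.
apply/seteqP; split=> z [xz zR]; split=> //.
  by rewrite -(shift_root_fixed zR); exists z.
rewrite -(decomp_root dec); split; first exact: xF.
by case: zR => w xw <-; apply: maps; apply: xF.
Qed.

Lemma shift_image_above x : x `<=` Fs 0 -> set_lt lt x (phi @` x `\` x).
Proof.
move=> xF a _ xa [[a' xa' <-] nxc]; have [_ dec [maps _ _]] := sh.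
apply: (decomp_lt dec (xF _ xa)); split; first exact: maps (xF _ xa').
move=> /(shift_root_inv (xF _ xa')) Ra'; apply: nxc.
by rewrite shift_root_fixed.
Qed.

Lemma root_above x x' : x `<=` Fs 0 -> ~ x `<=` R -> set_lt lt x (x' `\` x) ->
  x' `&` R `<=` x.
Proof.
move=> xF /existsNP[e /not_implyP[xe nRe]] xlt z [x'z Rz]; apply: contrapT => nxz.
have [_ dec _] := sh; have [_ initR] := decomp_root_init0 dec.
exact: nRe (initR e z (xF _ xe) Rz (xlt _ _ xe (conj x'z nxz))).
Qed.

Lemma pair_color_shift b a a' : (Fs 0 `\` R) a -> (Fs 0 `\` R) a' ->
  (if b then lt a a' else lt a' a) -> pair_color b a (phi a').
Proof.
move=> [F0a nRa] [F0a' nRa'] aa'; have [_ _ [maps _ incr]] := sh.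
exists k, F, Fs, R, phi; split=> //.
  by split; [exact: maps | move/(shift_root_inv F0a')].
by case: b aa'; [apply: incr | move=> a'a; apply: incr].
Qed.

Lemma shift_image_root x y : x `<=` Fs 0 -> y `<=` Fs 0 -> y = phi @` x -> y `<=` R.
Proof.
move=> xF yF ey z yz; have [_ dec [maps _ _]] := sh.
rewrite -(decomp_root dec); split; first exact: yF.
by move: yz; rewrite ey => -[w xw <-]; apply: maps; apply: xF.
Qed.

Section Union.
Variables x x' : set T.
Hypotheses (xF : x `<=` Fs 0) (x'F : x' `<=` Fs 0) (xlt : set_lt lt x (x' `\` x))
  (xx'R : x `&` x' `<=` R) (xR : x `&` R `<=` x') (x'R : x' `&` R `<=` x).

Lemma shift_setU_homogeneous_true : homogeneous true x ->
  homogeneous true (phi @` x') -> homogeneous true (x `|` phi @` x').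
Proof.
move=> hx hy'; apply: homogeneous_setU => // a _ xa ny'a [a' x'a' <-] nxc.
have nxa' : ~ x a' by move=> xa'; apply: nxc; rewrite shift_root_fixed //; apply: xx'R.
have nRa' : ~ R a' by move=> Ra'; apply: nxa'; apply: x'R.
have nRa : ~ R a.
  by move=> Ra; apply: ny'a; exists a; [apply: xR | apply: shift_root_fixed].
by apply: pair_color_shift; [split; [apply: xF|] | split; [apply: x'F|] | apply: xlt].
Qed.

Lemma shift_setU_homogeneous_false : homogeneous false x' ->
  homogeneous false (phi @` x) -> homogeneous false (x' `|` phi @` x).
Proof.
move=> hx' hy; apply: homogeneous_setU => // a _ x'a nya [a' xa' <-] nx'c.
have nxa : ~ x a.
  by move=> xa; apply: nya; exists a => //; apply: shift_root_fixed; apply: xx'R.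
have nRa : ~ R a by move=> Ra; apply: nxa; apply: x'R.
have nRa' : ~ R a'.
  by move=> Ra'; apply: nx'c; rewrite shift_root_fixed //; apply: xR.
by apply: pair_color_shift; [split; [apply: x'F|] | split; [apply: xF|] | apply: xlt].
Qed.

End Union.

End Shift.

Lemma split_level_le k F Fs R k' F' Fs' R' a c :
  level Fam k.+1 F -> decomp lt Fam n r k.+1 F Fs R -> Fs 0 a -> (Fs 1 `\` R) c ->
  decomp lt Fam n r k'.+1 F' Fs' R' -> (Fs' 0 `\` R') a -> Fs' 1 c -> k' <= k.
Proof.
move=> lF dec F0a F1c dec' [F0'a nR'a] F1'c; rewrite leqNgt; apply/negP => kk'.
have [_ initF] := level_init_seg_le kk' lF (decomp_level dec' (isT : 1 <= 1)).
have [_ F1'a] := initF a c (decomp_sub dec (isT : 0 <= 1) F0a)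
  (conj (decomp_sub dec (isT : 1 <= 1) F1c.1) F1'c) (decomp_lt dec F0a F1c).
by apply: nR'a; rewrite -(decomp_root dec').
Qed.

Lemma split_shift_unique k F Fs R phi F' Fs' R' phi' a c :
  decomp lt Fam n r k.+1 F Fs R -> incr_bij lt phi (Fs 0) (Fs 1) ->
  decomp lt Fam n r k.+1 F' Fs' R' -> incr_bij lt phi' (Fs' 0) (Fs' 1) ->
  Fs 0 a -> Fs' 0 a -> Fs 1 c -> Fs' 1 c -> lt (phi a) c -> phi a = phi' a.
Proof.
move=> dec ib dec' ib' F0a F0'a F1c F1'c ac.
have init_l i j : i <= 1 -> j <= 1 -> init_seg lt (Fs i `&` Fs' j) (Fs i).
  by move=> i1 j1; apply: level_init_seg (decomp_level dec i1) (decomp_level dec' j1).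
have init_r i j : i <= 1 -> j <= 1 -> init_seg lt (Fs i `&` Fs' j) (Fs' j).
  move=> i1 j1; rewrite setIC.
  exact: level_init_seg (decomp_level dec' j1) (decomp_level dec i1).
pose L := [set y | Fs 0 y /\ (y = a \/ lt y a)].
have L0 : init_seg lt L (Fs 0).
  split=> [y []//|z y F0z [_ [->|ya]] zy]; split=> //; right=> //.
  exact: lt_trans ya.
have LF0' : L `<=` Fs' 0.
  move=> y [F0y [->//|ya]]; have [_ init00] := init_l 0 0 isT isT.
  by have [] := init00 y a F0y (conj F0a F0'a) ya.
have [maps _ incr] := ib; have [maps' _ incr'] := ib'.
apply: (@incr_init_unique L (Fs' 1)); last by split=> //; left.
- by move=> x y [F0x _] [F0y _]; apply: incr.
- by move=> x y /LF0' F0'x /LF0' F0'y; apply: incr'.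
- apply: (init_seg_transfer (incr_bij_init_seg ib L0) _ (init_r 1 1 isT isT)).
  move=> _ [y [F0y ya] <-]; have [_ init11] := init_l 1 1 isT isT.
  suff /(init11 _ c (maps _ F0y) (conj F1c F1'c))[] : lt (phi y) c by [].
  by case: ya => [->//|ya]; apply: lt_trans ac; apply: incr.
- exact: (incr_bij_init_seg ib' (init_seg_transfer L0 LF0' (init_r 0 0 isT isT))).
Qed.

Lemma pair_color_exclusive a c : pair_color true a c -> pair_color false a c -> False.
Proof.
move=> [k [F [Fs [R [phi [[lF dec ib] F0a F1c ac]]]]]].
move=> [k' [F' [Fs' [R' [phi' [[lF' dec' ib'] F0'a F1'c ca]]]]]].
have ekk' : k' = k.
  apply/eqP; rewrite eqn_leq (split_level_le lF dec F0a.1 F1c dec' F0'a F1'c.1).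
  exact: (split_level_le lF' dec' F0'a.1 F1'c dec F0a F1c.1).
subst k'.
have e := split_shift_unique dec ib dec' ib' F0a.1 F0'a.1 F1c.1 F1'c.1 ac.
by rewrite /= -e in ca; apply: lt_asym ac ca.
Qed.

Section Capturing.
Hypothesis Fam_cap : n_capturing lt Fam n r 2.

Lemma capture_pair (S : set (set T)) : (forall s, S s -> finite_set s) ->
  ~ countable S ->
  exists c0 c1 k F Fs R phi, [/\ [/\ S c0, S c1 & c0 <> c1], shift k F Fs R phi,
    c0 `<=` Fs 0 & phi @` c0 = c1].
Proof.
move=> fS nS.
have [C [CS C2 [l [l0 [F lF [p [pn [c [cinj eC [Fs [R [dec hc]]]]]]]]]]]] :=
  Fam_cap fS nS 0.
have ep : p = 2.
  apply/card_eq_II; apply: card_eq_trans C2; rewrite eC; apply: card_esym.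
  by apply: inj_card_eq => i j /set_mem ip /set_mem jp; apply: cinj.
subst p; case: l l0 lF dec hc {pn} => [//|k] _ lF dec hc.
have [c0F _ _] := hc 0 isT; have [_ _ [phi ib ec]] := hc 1 isT.
exists (c 0), (c 1), k, F, Fs, R, phi; split=> //.
by split; [apply: CS; rewrite eC; exists 0 | apply: CS; rewrite eC; exists 1
  | move=> /cinj-/(_ isT isT)].
Qed.

Lemma partner_cocountable (S : set (set T)) : (forall s, S s -> finite_set s) ->
  countable [set x | S x /\ ~ exists2 x', S x' /\ x' <> x & set_lt lt x (x' `\` x)].
Proof.
move=> fS; set P := (X in countable X); apply: contrapT => nP.
have [c0 [c1 [k [F [Fs [R [phi [[[_ n0] [S1 _] c01] sh c0F ec]]]]]]]] :=
  @capture_pair P (fun s Ps => fS s Ps.1) nP.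
apply: n0; exists c1; first by split=> //; apply: nesym.
by rewrite -ec; exact: (shift_image_above sh c0F).
Qed.

Lemma double_capture (S : set (set T)) D N :
  (forall x, S x -> finite_set x /\ fcard x = N) -> ~ countable S -> delta S D ->
  exists x x' k F Fs R phi, [/\ [/\ S x, S x', S (phi @` x) & S (phi @` x')],
    x <> x' /\ x <> phi @` x, set_lt lt x (x' `\` x), shift k F Fs R phi
    & x `|` x' `<=` Fs 0].
Proof.
move=> hS nS dS.
pose has_partner x := exists2 x', S x' /\ x' <> x & set_lt lt x (x' `\` x).
pose Sp := [set x | S x /\ has_partner x].
have nSp : ~ countable Sp.
  have fS x : S x -> finite_set x by move=> /hS[].
  move=> cSp; apply: (uncountable_setD nS (partner_cocountable fS)).
  apply: sub_countable cSp; apply: subset_card_le => x [Sx nx]; split=> //.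
  by apply: contrapT => nhx; apply: nx.
have /choice[pi hpi] : forall x, exists p, Sp x ->
    [/\ S p, p <> x & set_lt lt x (p `\` x)].
  move=> x; have [[_ [p [Sp' px] xp]]|nx] := pselect (Sp x); first by exists p.
  by exists set0 => /nx.
pose u x := x `|` pi x.
have hu x : Sp x -> x `<=` u x /\ finite_set (u x).
  move=> Spx; have [Spi _ _] := hpi x Spx; split=> [z xz|]; first by left.
  by rewrite finite_setU; split; [exact: (hS x Spx.1).1 | exact: (hS _ Spi).1].
have fV v : (u @` Sp) v -> finite_set v by move=> [x /hu[_ fu] <-].
have [_ [_ [k [F [Fs [R [phi [[[x0 Spx0 <-] [x1 Spx1 <-] nu] sh u0F eu]]]]]]]] :=
  capture_pair fV (uncountable_image_supset hu nSp).
have [[Sx0 _] [Sx1 _]] := (Spx0, Spx1).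
have [Sp0 np0 lt0] := hpi x0 Spx0; have [Sp1 np1 lt1] := hpi x1 Spx1.
have [_ dec ib] := sh; have [maps _ _] := ib.
have DR : D `<=` R.
  move=> z Dz; rewrite -(decomp_root dec); split.
    by apply: u0F; left; exact: (delta_root_sub nS dS Sx0 Dz).
  have : u x1 z by left; exact: (delta_root_sub nS dS Sx1 Dz).
  by rewrite -eu => -[w /u0F F0w <-]; apply: maps.
have [ex0 ep0] : phi @` x0 = x1 /\ phi @` pi x0 = pi x1.
  apply: incr_bij_partner_image => //.
  - by rewrite -/(u x1) -eu; apply: incr_bij_sub ib u0F.
  - by rewrite !dS //; apply: nesym.
  - by move=> z; rewrite dS; [move/DR; exact: (shift_root_fixed sh) | | | apply: nesym].
  - exact: (hS x0 Sx0).1.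
  - exact: (hS x1 Sx1).1.
  - by rewrite (hS x0 Sx0).2 (hS x1 Sx1).2.
exists x0, (pi x0), k, F, Fs, R, phi; rewrite ex0 ep0; split=> //.
split; first exact: nesym.
by move=> e; apply: nu; rewrite /u e.
Qed.

Lemma homogeneous_pair_union b (S0 : set (set T)) :
  (forall x, S0 x -> finite_set x /\ homogeneous b x) -> ~ countable S0 ->
  exists p q, [/\ S0 p, S0 q, p <> q & homogeneous b (p `|` q)].
Proof.
move=> hS0 nS0.
have [S [D [N [SS0 nS cS dS]]]] := delta_system (fun x Sx => (hS0 x Sx).1) nS0.
have hS x : S x -> finite_set x /\ fcard x = N.
  by move=> Sx; split; [exact: (hS0 _ (SS0 _ Sx)).1 | exact: cS].
have hom x : S x -> homogeneous b x by move=> /SS0 /hS0[].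
have [x [x' [k [F [Fs [R [phi [[Sx Sx' Sy Sy'] [nxx' nxy] xlt sh sub]]]]]]]] :=
  double_capture hS nS dS.
have xF : x `<=` Fs 0 by move=> z xz; apply: sub; left.
have x'F : x' `<=` Fs 0 by move=> z x'z; apply: sub; right.
have xR : x `&` R = D by rewrite (shift_setI_root sh xF) dS.
have nxR : ~ x `<=` R.
  move=> xsub; apply: (delta_root_proper nS dS hS Sx) => z xz.
  by rewrite -xR; split=> //; apply: xsub.
have x'R : x' `&` R `<=` x := root_above sh xF nxR xlt.
have nx'R : ~ x' `<=` R.
  move=> x'sub; apply: (delta_root_proper nS dS hS Sx') => z x'z.
  by rewrite -(dS _ _ Sx Sx' nxx'); split=> //; apply: x'R; split=> //; apply: x'sub.
have xx'R : x `&` x' `<=` R by rewrite (dS _ _ Sx Sx' nxx') -xR => z [].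
have xRx' : x `&` R `<=` x' by rewrite xR; exact: (delta_root_sub nS dS Sx').
case: b {hS0} hom => hom.
- exists x, (phi @` x'); split; [exact: SS0 | exact: SS0 | |].
    by move/(shift_image_root sh x'F xF)/nxR.
  by apply: (shift_setU_homogeneous_true sh xF x'F xlt xx'R xRx' x'R); apply: hom.
- exists x', (phi @` x); split; [exact: SS0 | exact: SS0 | |].
    by move/(shift_image_root sh xF x'F)/nx'R.
  by apply: (shift_setU_homogeneous_false sh xF x'F xlt xx'R xRx' x'R); apply: hom.
Qed.

Definition homset b := {z : set T | finite_set z /\ homogeneous b z}.

Definition homset_le b (p q : homset b) := sval q `<=` sval p.

Lemma homset_inj b (p q : homset b) : sval p = sval q -> p = q.
Proof.
by case: p q => [p hp] [q hq] /= e; subst q; rewrite (Prop_irrelevance hp hq).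
Qed.

Lemma homset_partial_order b : partial_order (@homset_le b).
Proof.
split=> [p|p q pq qp|p q s pq qs]; first by [].
  by apply: homset_inj; apply/seteqP; split.
by move=> z /qs /pq.
Qed.

Lemma homset_ccc b : ccc (@homset_le b).
Proof.
move=> A anti; apply: contrapT => nA.
have nS0 : ~ countable (sval @` A).
  by apply: uncountable_image => // p q _ _; apply: homset_inj.
have hS0 x : (sval @` A) x -> finite_set x /\ homogeneous b x.
  by move=> [p _ <-]; exact: svalP p.
have [_ [_ [[p Ap <-] [q Aq <-] npq hpq]]] := homogeneous_pair_union hS0 nS0.
have fpq : finite_set (sval p `|` sval q).
  by rewrite finite_setU; split; [case: (svalP p) | case: (svalP q)].
apply: (anti p q Ap Aq); first by move=> e; apply: npq; rewrite e.
pose s : homset b := exist _ (sval p `|` sval q) (conj fpq hpq).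
by exists s; split=> z zpq /=; [left | right].
Qed.

Lemma homset1_subproof b (a : T) : finite_set [set a] /\ homogeneous b [set a].
Proof. by split=> [|x y -> -> /lt_irr //]; exact: finite_set1. Qed.

Definition homset1 b (a : T) : homset b := exist _ [set a] (homset1_subproof b a).

Lemma homset_prod_not_ccc : ~ countable [set: T] ->
  ~ ccc (prod_le (@homset_le true) (@homset_le false)).
Proof.
move=> nT prod_ccc; pose f a := (homset1 true a, homset1 false a).
apply: (uncountable_image (f := f) _ nT).
  move=> a c _ _ /(congr1 (fun p => sval p.1)) /= e.
  by have : [set c] a by rewrite -e.
apply: prod_ccc => _ _ [a _ <-] [c _ <-] nac [s [[sa1 sa2] [sc1 sc2]]].
have [[_ hs1] [_ hs2]] := (svalP s.1, svalP s.2).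
have [s1a s1c] : sval s.1 a /\ sval s.1 c by split; [apply: sa1 | apply: sc1].
have [s2a s2c] : sval s.2 a /\ sval s.2 c by split; [apply: sa2 | apply: sc2].
have [ac|eac|ca] := lt_total a c; last 2 first.
- by apply: nac; rewrite eac.
- exact: pair_color_exclusive (hs1 _ _ s1c s1a ca) (hs2 _ _ s2c s2a ca).
exact: pair_color_exclusive (hs1 _ _ s1a s1c ac) (hs2 _ _ s2a s2c ac).
Qed.

Lemma scheme_ccc_not_productive : ~ countable [set: T] ->
  exists (P : Type) (leP : P -> P -> Prop) (Q : Type) (leQ : Q -> Q -> Prop),
    [/\ partial_order leP, partial_order leQ, ccc leP, ccc leQ
      & ~ ccc (prod_le leP leQ)].
Proof.
move=> nT; exists (homset true), (@homset_le true), (homset false), (@homset_le false).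
split; [exact: homset_partial_order | exact: homset_partial_order
  | exact: homset_ccc | exact: homset_ccc | exact: homset_prod_not_ccc].
Qed.

End Capturing.
End Scheme.
End StrictWellOrder.

Definition two_n (k : nat) := 2.

(* The 2-adic valuation takes every value infinitely often. *)
Definition two_r (k : nat) := logn 2 k.

Fixpoint two_m (k : nat) :=
  if k is k'.+1 then two_r k + (two_m k' - two_r k) * two_n k else 1.

Lemma two_r_le k : two_r k.+1 <= k.
Proof. by rewrite /two_r -ltnS; apply: ltn_logl. Qed.

Lemma two_m_gt k : k < two_m k.
Proof.
elim: k => [//|k IH] /=; have := two_r_le k.
rewrite /two_n; move: IH; generalize (two_r k.+1) (two_m k); lia.
Qed.

Lemma is_type_two : is_type two_m two_n two_r.
Proof.
split=> // [x N|k].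
  exists (2 ^ x * N.*2.+1); split.
    by apply: (leq_trans _ (leq_pmull _ (expn_gt0 2 x))); rewrite ltnS -addnn leq_addl.
  rewrite /two_r mulnC logn_Gauss ?pfactorK // coprime2n /=.
  by rewrite odd_double.
by have := two_r_le k; have := two_m_gt k; lia.
Qed.

Theorem mainTheorem12 (W : Type) (lt : W -> W -> Prop) :
  is_omega1 lt -> CA lt 2 ->
  exists (P : Type) (leP : P -> P -> Prop) (Q : Type) (leQ : Q -> Q -> Prop),
    [/\ partial_order leP, partial_order leQ, ccc leP, ccc leQ
      & ~ ccc (prod_le leP leQ)].
Proof.
move: lt; elim/Pchoice: W => W lt [lt_irr lt_trans lt_total lt_wf [nW _]] hCA.
have [Fam [Fam_cs Fam_cap]] := hCA _ _ _ is_type_two (fun _ _ => leqnn 2).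
exact: (scheme_ccc_not_productive lt_irr lt_trans lt_total lt_wf Fam_cs
  (fun _ _ => isT) Fam_cap nW).
Qed.
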